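(* Let $P$ be a finite poset, $\mathcal{J}\subseteq\mathrm{Hom}(P,\mathbb{N})$ a poset ideal, and $S$ a finite set with $\mathrm{Supp}(\mathcal{J})\subseteq S\subseteq P\times\mathbb{N}$, given the induced partial order from $P\times\mathbb{N}$. Let $R$ be a poset and $\phi:S\to R$ an isotone map with right strict chain fibers. Let $B$ be a basis of the kernel of the $k$-linear map $\bigoplus_{s\in S}k x_s\to\bigoplus_{r\in R}k x_r$, $x_s\mapsto x_{\phi(s)}$, consisting of differences $x_{s}-x_{s'}$ with $\phi(s)=\phi(s')$. Then $B$ is a regular sequence on $k[x_S]/L(\mathcal{J},P)$.
   Context: $\mathbb{N}=\{0,1,2,\dots\}$; $\mathrm{Hom}(P,\mathbb{N})$ is the set of isotone maps $P\to\mathbb{N}$ ordered pointwise; $\mathcal{J}^c$ is the complement of $\mathcal{J}$. The ascent of $\psi\in\mathrm{Hom}(P,\mathbb{N})$ is $\Lambda\psi=\{(p,i): \psi(q)\le i<\psi(p)\ \forall q<p\}$. A marker for $\mathcal{J}$ is a poset ideal $I\subseteq P$ with an isotone $\alpha:I\to\mathbb{N}$ such that every isotone extension of $\alpha$ to $P$ lies in $\mathcal{J}$; its graph is $\Gamma\alpha=\{(p,\alpha(p)):p\in I\}$. With $k$ a field and $m_T=\prod_{t\in T}x_t$, the letterplace ideal $L(\mathcal{J},P)$ is the monomial ideal in the variables $x_{p,i}$ generated by $m_{\Lambda\psi}$, $\psi\in\mathcal{J}^c$, and the co-letterplace ideal $L(P,\mathcal{J})$ is generated by $m_{\Gamma\alpha}$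 over markers $\alpha$. $\mathrm{Supp}(\mathcal{J})$ is the (finite) set of $(p,i)$ such that $x_{p,i}$ divides some minimal monomial generator of $L(\mathcal{J},P)$ (equivalently of its Alexander dual $L(P,\mathcal{J})$); for $S\supseteq\mathrm{Supp}(\mathcal{J})$ these ideals are regarded as ideals of $k[x_S]$ generated by their minimal generators. $P^{\mathrm{op}}$ is the opposite poset and $P^{\mathrm{op}}\times\mathbb{N}$ has the product order. The map $\phi$ has right strict chain fibers if each fiber $\phi^{-1}(r)$ is a chain in $P^{\mathrm{op}}\times\mathbb{N}$ whose elements have pairwise distinct second coordinates; i.e. if $(p,i)\ne(q,j)$ lie in a fiber with $i\le j$, then $i<j$ and $p\ge q$ in $P$. *)

From HB Require Import structures.
From mathcomp Require Import all_boot all_order all_algebra.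
From mathcomp Require Import finmap.
From mathcomp Require Import mpoly.

Set Implicit Arguments.
Unset Strict Implicit.
Unset Printing Implicit Defensive.

Import Order.Theory GRing.Theory.
Local Open Scope fset_scope.

Section Letterplace.
Context {d : Order.disp_t} (P : finPOrderType d).

Definition isotone (psi : {ffun P -> nat}) : Prop :=
  forall p q : P, (p <= q)%O -> psi p <= psi q.

Definition poset_ideal_Hom (J : {ffun P -> nat} -> Prop) : Prop :=
  (forall psi, J psi -> isotone psi) /\
  (forall psi psi', J psi -> isotone psi' -> (forall p, psi' p <= psi p) -> J psi').

Definition Jcompl (J : {ffun P -> nat} -> Prop) (psi : {ffun P -> nat}) : Prop :=
  isotone psi /\ ~ J psi.

Definition ascent (psi : {ffun P -> nat}) (x : P * nat) : bool :=
  [forall q : P, (q < x.1)%O ==> (psi q <= x.2)] && (x.2 < psi x.1).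

(* m_{Lambda psi} is a minimal monomial generator of L(J,P): psi in J^c and
   no generator m_{Lambda psi'} (psi' in J^c) properly divides it, i.e. no
   Lambda psi' is a proper subset of Lambda psi. *)
Definition min_gen (J : {ffun P -> nat} -> Prop) (psi : {ffun P -> nat}) : Prop :=
  Jcompl J psi /\
  ~ (exists psi', Jcompl J psi' /\ (forall x, ascent psi' x -> ascent psi x)
                  /\ (exists x, ascent psi x && ~~ ascent psi' x)).

(* Supp(J): the (p,i) such that x_{p,i} divides some minimal generator *)
Definition Supp (J : {ffun P -> nat} -> Prop) (x : P * nat) : Prop :=
  exists psi, min_gen J psi /\ ascent psi x.

End Letterplace.

Section Ring.
Context {d : Order.disp_t} (P : finPOrderType d) (k : fieldType)
        (S : {fset (P * nat)}).

Definition polyS := {mpoly k[#|{: S}|]}.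

Definition xv (s : S) : polyS := 'X_(enum_rank s).

Definition monS (T : pred (P * nat)) : polyS := (\prod_(s : S | T (val s)) xv s)%R.

(* the letterplace ideal L(J,P) of k[x_S]: generated by its minimal generators *)
Definition LP_gen (J : {ffun P -> nat} -> Prop) (f : polyS) : Prop :=
  exists psi, min_gen J psi /\ f = monS (ascent psi).

End Ring.

Section Reg.
Context (A : comNzRingType).

Definition in_ideal (G : A -> Prop) (f : A) : Prop :=
  exists (n : nat) (c g : 'I_n -> A),
    (forall i, G (g i)) /\ f = (\sum_(i < n) c i * g i)%R.

Definition gens_with (G : A -> Prop) (l : seq A) (g : A) : Prop := G g \/ g \in l.

(* b_1,...,b_m is weakly regular on A/I (I generated by G): each b_j is a
   non-zero-divisor on A/(I + (b_1,...,b_{j-1})) *)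
Definition weakly_regular (G : A -> Prop) (bs : seq A) : Prop :=
  forall j, j < size bs -> forall f : A,
    in_ideal (gens_with G (take j bs)) (nth 0%R bs j * f)%R ->
    in_ideal (gens_with G (take j bs)) f.

(* regular sequence on A/I: weakly regular and (A/I)/(b_1..b_m)(A/I) <> 0 *)
Definition regular_seq (G : A -> Prop) (bs : seq A) : Prop :=
  weakly_regular G bs /\ ~ in_ideal (gens_with G bs) 1%R.

End Reg.

Section Lin.
Context {d : Order.disp_t} (P : finPOrderType d) (k : fieldType)
        (S : {fset (P * nat)}) {dR : Order.disp_t} (R : porderType dR)
        (phi : S -> R).

Definition evec (s : S) : {ffun S -> k^o} := [ffun t => ((t == s)%:R)%R].

Definition dvec (b : S * S) : {ffun S -> k^o} := (evec b.1 - evec b.2)%R.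

Definition in_ker (v : {ffun S -> k^o}) : Prop :=
  forall r : R, (\sum_(s : S | phi s == r) v s = 0)%R.

(* B (a list of pairs (s,s') standing for x_s - x_s') is a basis of the kernel *)
Definition kernel_basis (B : seq (S * S)) : Prop :=
  free (map dvec B) /\
  (forall v : {ffun S -> k^o}, v \in <<map dvec B>>%VS <-> in_ker v).

End Lin.

Definition le_PN {d : Order.disp_t} {P : finPOrderType d} (x y : P * nat) : bool :=
  (x.1 <= y.1)%O && (x.2 <= y.2).

(* Substituting for every variable x_s the representative of its class modulo
   the span of b_1, ..., b_j turns L(J,P) + (b_1, ..., b_j) into the monomial
   ideal generated by the collapsed generators m_{Lambda psi}.  Since B is free
   and lies in the kernel, b_{j+1} = x_a - x_c then becomes X_a' - X_c' with
   a' <> c' in one fibre of phi.  Modulo a monomial ideal, X_a - X_b is a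
   non-zero-divisor as soon as the ideal contains the meet of any two of its
   monomials that agree outside a and b.  For the collapsed ideal this holds by
   gluing psi1, psi2 outside J into max(psi1, min(psi2, t)): every fibre of phi
   is a chain of P^op x N, on which the ascent of the glued map is contained in
   that of psi1 or of psi2, and in both on the fibre of a for a well chosen
   threshold t.  When J is nonempty all generators vanish at 0, so the quotient
   is nonzero. *)

From HB Require Import structures.
From mathcomp Require Import all_boot all_order all_algebra.
From mathcomp Require Import finmap.
From mathcomp Require Import mpoly.
From mathcomp Require Import zify.
From Stdlib Require Import Classical.
Import Order.Theory GRing.Theory.

Set Implicit Arguments.
Unset Strict Implicit.
Unset Printing Implicit Defensive.

Section IdealOf.
Variable A : comNzRingType.
Local Open Scope ring_scope.
Implicit Types (G : A -> Prop) (x y : A).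

Inductive ideal_of G : A -> Prop :=
| ideal_of0 : ideal_of G 0
| ideal_ofMD c g x : G g -> ideal_of G x -> ideal_of G (c * g + x).

Lemma ideal_of_gen G g : G g -> ideal_of G g.
Proof. by move=> Gg; rewrite -[g]addr0 -[g]mul1r; apply: ideal_ofMD (ideal_of0 G). Qed.

Lemma ideal_ofD G x y : ideal_of G x -> ideal_of G y -> ideal_of G (x + y).
Proof.
by move=> Ix Iy; elim: Ix => [|c g z Gg _ IH]; rewrite ?add0r // -addrA; apply: ideal_ofMD.
Qed.

Lemma ideal_ofM G c x : ideal_of G x -> ideal_of G (c * x).
Proof.
elim=> [|c' g z Gg _ IH]; first by rewrite mulr0; apply: ideal_of0.
by rewrite mulrDr mulrA; apply: ideal_ofMD.
Qed.

Lemma ideal_ofN G x : ideal_of G x -> ideal_of G (- x).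
Proof. by rewrite -mulN1r; apply: ideal_ofM. Qed.

Lemma ideal_ofB G x y : ideal_of G x -> ideal_of G y -> ideal_of G (x - y).
Proof. by move=> Ix /ideal_ofN; apply: ideal_ofD. Qed.

Lemma ideal_of_sum G (I : Type) (r : seq I) (Q : pred I) (F : I -> A) :
  (forall i, Q i -> ideal_of G (F i)) -> ideal_of G (\sum_(i <- r | Q i) F i).
Proof.
move=> IF; elim/big_rec: _ => [|i x Qi Ix]; first exact: ideal_of0.
exact: ideal_ofD (IF i Qi) Ix.
Qed.

Lemma ideal_of_trans G G' x :
  (forall g, G g -> ideal_of G' g) -> ideal_of G x -> ideal_of G' x.
Proof.
move=> GG'; elim=> [|c g z Gg _ IH]; first exact: ideal_of0.
exact: ideal_ofD (ideal_ofM c (GG' g Gg)) IH.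
Qed.

Lemma in_idealE G x : in_ideal G x <-> ideal_of G x.
Proof.
split=> [[n [c [g [Gg ->]]]]|]; first by apply: ideal_of_sum => i _; apply/ideal_ofM/ideal_of_gen.
elim=> [|c g z Gg _ [n [c' [g' [Gg' ->]]]]].
  by exists 0%N, (fun _ => 0), (fun _ => 0); split; [case|rewrite big_ord0].
pose ext (a : A) (h : 'I_n -> A) (i : 'I_n.+1) :=
  if unlift ord0 i is Some i' then h i' else a.
exists n.+1, (ext c c'), (ext g g'); split; first by move=> i; rewrite /ext; case: unlift.
by rewrite big_ord_recl /ext unlift_none; congr (_ + _); apply: eq_bigr => i _; rewrite liftK.
Qed.

End IdealOf.

Section IdealMorphism.
Variables (A A' : comNzRingType) (f : {rmorphism A -> A'}).
Local Open Scope ring_scope.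

Lemma ideal_of_rmorph G G' x :
  (forall g, G g -> ideal_of G' (f g)) -> ideal_of G x -> ideal_of G' (f x).
Proof.
move=> fG; elim=> [|c g z Gg _ IH]; first by rewrite rmorph0; apply: ideal_of0.
by rewrite rmorphD rmorphM; apply: ideal_ofD IH; apply/ideal_ofM/fG.
Qed.

Lemma ideal_of_kernel G x : (forall g, G g -> f g = 0) -> ideal_of G x -> f x = 0.
Proof.
move=> fG; elim=> [|c g z Gg _ IH]; first exact: rmorph0.
by rewrite rmorphD rmorphM (fG g Gg) IH mulr0 addr0.
Qed.

End IdealMorphism.

Section MonomialIdeal.
Variables (n : nat) (k : fieldType) (G : 'X_{1..n} -> Prop).
Local Open Scope ring_scope.
Implicit Types (a b v : 'I_n) (g : {mpoly k[n]}) (w : 'X_{1..n}).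

Definition mono_gens g : Prop := exists2 m, G m & g = 'X_[m].

Definition mdivisible w : Prop := exists2 m, G m & (m <= w)%MM.

Lemma mdivisible_le w w' : mdivisible w -> (w <= w')%MM -> mdivisible w'.
Proof. by case=> m Gm le_mw le_ww'; exists m => //; apply: lepm_trans le_ww'. Qed.

Lemma mono_idealP g : ideal_of mono_gens g <-> {in msupp g, forall w, mdivisible w}.
Proof.
split=> [|Hg]; last first.
  rewrite [g]mpolyE big_seq; apply: ideal_of_sum => w /Hg[m Gm le_mw].
  rewrite -(submK le_mw) mpolyXD -mul_mpolyC mulrA.
  by apply/ideal_ofM/ideal_of_gen; exists m.
elim=> [|c _ h [m Gm ->] _ IHh] w; first by rewrite msupp0.
rewrite mcoeff_msupp mcoeffD.
have [cXw0|] := eqVneq (c * 'X_[m])@_w 0; first by rewrite cXw0 add0r -mcoeff_msupp; apply: IHh.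
rewrite -mcoeff_msupp (perm_mem (msuppMX _ _)) => /mapP[m' _ ->] _.
by exists m => //; apply: lem_addr.
Qed.

Lemma mcoeffXM a g w : ('X_a * g)@_(w + U_(a))%MM = g@_w.
Proof. by rewrite mulrC addmC mcoeffMX. Qed.

Lemma mcoeffXM_neq a b g w : a != b ->
  ('X_b * g)@_(w + U_(a))%MM = if (0 < w b)%N then g@_(w + U_(a) - U_(b))%MM else 0.
Proof.
move=> ab; case: ifP => wb.
  have le_bw : (U_(b) <= w + U_(a))%MM by rewrite lep1mP mnmDE mnm1E (negbTE ab) addn0 -lt0n.
  by rewrite -{1}(submK le_bw) mcoeffXM.
apply/eqP; rewrite mcoeff_eq0 mulrC (perm_mem (msuppMX _ _)).
apply/mapP => -[m _ /(congr1 (fun m : 'X_{1..n} => m b))].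
by rewrite !mnmDE !mnm1E eqxx (negbTE ab) addn0; move: wb; case: (w b).
Qed.

Definition mmeet_closed a b : Prop :=
  forall w1 w2 w, mdivisible w1 -> mdivisible w2 ->
    (forall v, v != a -> v != b -> w1 v = w2 v) ->
    (forall v, minn (w1 v) (w2 v) <= w v)%N -> mdivisible w.

(* While [w + U_(a)] is not divisible, the coefficient [g@_w - g@_(w + U_(a) - U_(b))]
   of [('X_a - 'X_b) * g] at [w + U_(a)] vanishes, so moving one unit of exponent
   from [b] to [a] stays in the support of [g]. *)
Lemma mono_ideal_shift a b g : a != b -> ideal_of mono_gens (('X_a - 'X_b) * g) ->
  forall w, g@_w != 0 -> ~ mdivisible w ->
  exists w1, [/\ ~ mdivisible w1, mdivisible (w1 + U_(a))%MM,
    (forall v, v != a -> v != b -> w1 v = w v),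
    (w1 a + w1 b = w a + w b)%N & (w a <= w1 a)%N].
Proof.
move=> ab /mono_idealP Ih w; have [N] := ubnP (w b); elim: N w => // N IHN w lt_wbN gw0 ndw.
have [dwa|ndwa] := classic (mdivisible (w + U_(a))%MM); first by exists w.
have : (('X_a - 'X_b) * g)@_(w + U_(a))%MM == 0.
  by rewrite mcoeff_eq0; apply: contra_notN ndwa => /Ih.
rewrite mulrBl mcoeffB mcoeffXM mcoeffXM_neq //; case: ifPn => [wb|]; last first.
  by rewrite subr0 (negbTE gw0).
rewrite subr_eq0 => /eqP gw.
set w' := (w + U_(a) - U_(b))%MM.
have w'a : w' a = (w a).+1 by rewrite mnmBE mnmDE !mnm1E eqxx eq_sym (negbTE ab) addn1 subn0.
have w'b : w' b = (w b).-1 by rewrite mnmBE mnmDE !mnm1E eqxx (negbTE ab) addn0 subn1.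
have w'v v : v != a -> v != b -> w' v = w v.
  by move=> va vb; rewrite mnmBE mnmDE !mnm1E eq_sym (negbTE va) eq_sym (negbTE vb) addn0 subn0.
have [|||w1 [ndw1 dw1a w1v sw1 le_w1a]] := IHN w'.
- by rewrite w'b; move: lt_wbN wb; lia.
- by rewrite -gw.
- by move=> dw'; apply/ndwa/(mdivisible_le dw')/lem_subr.
exists w1; split=> //; first by move=> v va vb; rewrite w1v // w'v.
  by rewrite sw1 w'a w'b; move: wb; lia.
by apply: leq_trans le_w1a; rewrite w'a.
Qed.

Lemma mono_ideal_cancelXB a b g : a != b -> mmeet_closed a b ->
  ideal_of mono_gens (('X_a - 'X_b) * g) -> ideal_of mono_gens g.
Proof.
move=> ab meet Ih; have ba : b != a by rewrite eq_sym.
have Ih' : ideal_of mono_gens (('X_b - 'X_a) * g) by rewrite -opprB mulNr; apply: ideal_ofN.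
apply/mono_idealP => w0; rewrite mcoeff_msupp => gw0; apply: NNPP => ndw0.
have [w1 [ndw1 dw1 w1v sw1 le_w1a]] := mono_ideal_shift ab Ih gw0 ndw0.
have [w2 [_ dw2 w2v sw2 le_w2b]] := mono_ideal_shift ba Ih' gw0 ndw0.
(* [w1] lies above the meet of [w1 + U_(a)] and [w2 + U_(b)]. *)
apply/ndw1/(meet _ _ w1 dw1 dw2) => v; rewrite !mnmDE !mnm1E.
  by move=> va vb; rewrite !(eq_sym _ v) (negbTE va) (negbTE vb) !addn0 w1v // w2v.
have [->|va] := eqVneq v a; first by rewrite (negbTE ba) addn0; move: sw1 sw2 le_w1a le_w2b; lia.
by rewrite addn0 geq_min leqnn.
Qed.

End MonomialIdeal.

Section Ascent.
Context {d : Order.disp_t} (P : finPOrderType d).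
Implicit Types (psi : {ffun P -> nat}) (x y : P * nat) (C : seq (P * nat)).

Definition ascent_lo psi x := [forall q : P, (q < x.1)%O ==> (psi q <= x.2)].
Definition ascent_hi psi x := x.2 < psi x.1.

Lemma ascentE psi x : ascent psi x = ascent_lo psi x && ascent_hi psi x.
Proof. by []. Qed.

Definition hmax psi1 psi2 : {ffun P -> nat} := [ffun p => maxn (psi1 p) (psi2 p)].
Definition htrunc psi j : {ffun P -> nat} := [ffun p => minn (psi p) j].

Lemma isotone_hmax psi1 psi2 : isotone psi1 -> isotone psi2 -> isotone (hmax psi1 psi2).
Proof. by move=> iso1 iso2 p q pq; rewrite !ffunE geq_max !leq_max iso1 ?iso2 ?orbT. Qed.

Lemma isotone_htrunc psi j : isotone psi -> isotone (htrunc psi j).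
Proof. by move=> iso p q pq; rewrite !ffunE leq_min !geq_min leqnn iso ?orbT. Qed.

Lemma ascent_lo_hmax psi1 psi2 x :
  ascent_lo (hmax psi1 psi2) x = ascent_lo psi1 x && ascent_lo psi2 x.
Proof.
apply/forallP/andP => [lo|[/forallP lo1 /forallP lo2] q].
  by split; apply/forallP => q; apply/implyP => qx;
    move: (implyP (lo q) qx); rewrite ffunE geq_max => /andP[].
by apply/implyP => qx; rewrite ffunE geq_max (implyP (lo1 q) qx) (implyP (lo2 q) qx).
Qed.

Lemma ascent_hi_hmax psi1 psi2 x :
  ascent_hi (hmax psi1 psi2) x = ascent_hi psi1 x || ascent_hi psi2 x.
Proof. by rewrite /ascent_hi ffunE leq_max. Qed.

Lemma ascent_lo_htrunc psi j x : ascent_lo (htrunc psi j) x = (j <= x.2) || ascent_lo psi x.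
Proof.
rewrite /ascent_lo; case: leqP => [jx|xj] /=.
  by apply/forallP => q; rewrite ffunE geq_min jx orbT implybT.
by apply: eq_forallb => q; rewrite ffunE geq_min (leqNgt j) xj orbF.
Qed.

Lemma ascent_hi_htrunc psi j x : ascent_hi (htrunc psi j) x = ascent_hi psi x && (x.2 < j).
Proof. by rewrite /ascent_hi ffunE leq_min. Qed.

Definition right_strict_chain C := {in C &, forall x y, x.2 <= y.2 ->
  x = y \/ (x.2 < y.2 /\ (y.1 <= x.1)%O)}.

Definition down_closed C (D : pred (P * nat)) :=
  {in C &, forall x y, x.2 < y.2 -> D y -> D x}.

Lemma ascent_hi_down_closed psi C : isotone psi -> right_strict_chain C ->
  down_closed C (ascent_hi psi).
Proof.
move=> iso chC x y xC yC lt_xy; have [->//|[_ yx]] := chC x y xC yC (ltnW lt_xy).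
by rewrite /ascent_hi => lt_y; apply: leq_trans (iso _ _ yx); apply: ltn_trans lt_y.
Qed.

Lemma ascent_lo_up_closed psi C : right_strict_chain C ->
  down_closed C (predC (ascent_lo psi)).
Proof.
move=> chC x y xC yC lt_xy; apply: contra => lo_x; have [<-//|[_ yx]] := chC x y xC yC (ltnW lt_xy).
apply/forallP => q; apply/implyP => qy; apply: leq_trans (ltnW lt_xy).
exact: implyP (forallP lo_x q) (lt_le_trans qy yx).
Qed.

Lemma down_closed_nested C D1 D2 :
  right_strict_chain C -> down_closed C D1 -> down_closed C D2 ->
  {in C, forall x, D1 x -> D2 x} \/ {in C, forall x, D2 x -> D1 x}.
Proof.
move=> chC dc1 dc2; have [sub12|] := boolP (all (fun x => D1 x ==> D2 x) C).
  by left=> x /(allP sub12)/implyP.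
case/allPn => x xC; rewrite negb_imply => /andP[D1x nD2x]; right=> y yC D2y.
case: (ltngtP x.2 y.2) => [lt_xy|lt_yx|eq_xy].
- by rewrite (dc2 x y) in nD2x.
- exact: dc1 lt_yx D1x.
- have [eq|[]] := chC x y xC yC (eq_leq eq_xy); first by rewrite eq in nD2x; rewrite D2y in nD2x.
  by rewrite eq_xy ltnn.
Qed.

Lemma down_closed_threshold C D : right_strict_chain C -> down_closed C D ->
  exists j, {in C, forall x, (x.2 < j) = D x}.
Proof.
move=> chC dcD; have [|/hasPn allD] := boolP (has (predC D) C); last first.
  exists (\max_(y <- C) y.2).+1 => x xC.
  by rewrite ltnS (leq_bigmax_seq (F := snd) _ xC) // (negbNE (allD x xC)).
case/hasP => y0 y0C nDy0.
have exD : exists j, has (fun y => ~~ D y && (y.2 == j)) C.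
  by exists y0.2; apply/hasP; exists y0; rewrite // eqxx andbT.
case: (ex_minnP exD) => _ /hasP[y yC /andP[nDy /eqP <-]] ymin; exists y.2 => x xC.
apply/idP/idP => [lt_xy|Dx].
  apply: contraLR lt_xy => nDx; rewrite -leqNgt; apply: ymin.
  by apply/hasP; exists x; rewrite ?nDx ?eqxx.
rewrite ltnNge; apply: contra nDy => le_yx.
by have [->//|[lt_yx _]] := chC y x yC xC le_yx; apply: dcD lt_yx Dx.
Qed.

Lemma ascent_hmax_htrunc_sub psi1 psi2 j C :
  isotone psi1 -> isotone psi2 -> right_strict_chain C ->
  {in C, forall x, ascent (hmax psi1 (htrunc psi2 j)) x -> ascent psi1 x} \/
  {in C, forall x, ascent (hmax psi1 (htrunc psi2 j)) x -> ascent psi2 x}.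
Proof.
move=> iso1 iso2 chC.
have dc2j : down_closed C [pred x | ascent_hi psi2 x && (x.2 < j)].
  move=> x y xC yC lt_xy /andP[hi_y lt_yj].
  by rewrite /= (ascent_hi_down_closed iso2 chC xC yC lt_xy hi_y) (ltn_trans lt_xy lt_yj).
have [sub12|sub21] := down_closed_nested chC (ascent_hi_down_closed iso1 chC) dc2j.
  right=> x xC; rewrite !ascentE ascent_lo_hmax ascent_lo_htrunc ascent_hi_hmax ascent_hi_htrunc.
  case/andP=> /andP[_ lo2j] hi3.
  have /andP[hi2 lt_xj] : ascent_hi psi2 x && (x.2 < j) by case/orP: hi3 => // /(sub12 x xC).
  by rewrite hi2 andbT; move: lo2j; rewrite (leqNgt j) lt_xj.
left=> x xC; rewrite !ascentE ascent_lo_hmax ascent_lo_htrunc ascent_hi_hmax ascent_hi_htrunc.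
by case/andP=> /andP[-> _] /orP[|/(sub21 x xC)].
Qed.

Lemma ascent_hmax_htrunc_meet psi1 psi2 C :
  isotone psi1 -> isotone psi2 -> right_strict_chain C ->
  {in C, forall x, ascent_hi psi1 x -> ascent_hi psi2 x} ->
  exists j, {in C, forall x,
    ascent (hmax psi1 (htrunc psi2 j)) x -> ascent psi1 x && ascent psi2 x}.
Proof.
move=> iso1 iso2 chC hi12.
have [j lo2E] := down_closed_threshold chC (ascent_lo_up_closed (psi := psi2) chC).
exists j => x xC; rewrite !ascentE ascent_lo_hmax ascent_lo_htrunc ascent_hi_hmax ascent_hi_htrunc.
rewrite (leqNgt j) (lo2E x xC) negbK orbb.
case/andP=> /andP[lo1 lo2] /orP[hi1|/andP[_ /negP[]//]].
by rewrite lo1 lo2 hi1 (hi12 x xC hi1).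
Qed.

Variables (J : {ffun P -> nat} -> Prop) (hJ : poset_ideal_Hom J).

Lemma Jcompl_hmax psi1 psi2 : Jcompl J psi1 -> isotone psi2 -> Jcompl J (hmax psi1 psi2).
Proof.
case=> iso1 nJ1 iso2; split; first exact: isotone_hmax.
by move=> J3; apply/nJ1/(hJ.2 _ _ J3 iso1) => p; rewrite ffunE leq_maxl.
Qed.

Lemma Jcompl_glue psi1 psi2 C0 : Jcompl J psi1 -> Jcompl J psi2 -> right_strict_chain C0 ->
  exists psi3, [/\ Jcompl J psi3,
    forall C, right_strict_chain C ->
      {in C, forall x, ascent psi3 x -> ascent psi1 x} \/
      {in C, forall x, ascent psi3 x -> ascent psi2 x} &
    {in C0, forall x, ascent psi3 x -> ascent psi1 x && ascent psi2 x}].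
Proof.
move=> + + chC0; wlog hi12 : psi1 psi2 / {in C0, forall x, ascent_hi psi1 x -> ascent_hi psi2 x}.
  move=> gen J1 J2.
  have [|hi21] := down_closed_nested chC0 (ascent_hi_down_closed J1.1 chC0)
                                         (ascent_hi_down_closed J2.1 chC0).
    by move/gen; apply.
  have [psi3 [J3 sub3 meet3]] := gen psi2 psi1 hi21 J2 J1.
  exists psi3; split=> // [C /sub3[]|x xC /(meet3 x xC)]; [right|left|rewrite andbC] => //.
move=> J1 J2; have [j meet] := ascent_hmax_htrunc_meet J1.1 J2.1 chC0 hi12.
exists (hmax psi1 (htrunc psi2 j)); split=> // [|C chC].
  exact/Jcompl_hmax/isotone_htrunc/J2.1.
exact: ascent_hmax_htrunc_sub J1.1 J2.1 chC.
Qed.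

Lemma min_gen_below psi0 : Jcompl J psi0 ->
  exists psi, min_gen J psi /\ forall x, ascent psi x -> ascent psi0 x.
Proof.
pose K := (\max_p psi0 p).+1.
pose A psi := [set x : P * 'I_K | ascent psi (x.1, val x.2)].
suff: forall psi, Jcompl J psi -> (forall x, ascent psi x -> ascent psi0 x) ->
  exists psi', min_gen J psi' /\ forall x, ascent psi' x -> ascent psi x.
  by move=> + J0 => /(_ psi0 J0 (fun x => id)).
move=> psi; have [N] := ubnP #|A psi|; elim: N psi => // N IHN psi ltAN Jpsi sub0.
have [mg|nmg] := classic (min_gen J psi); first by exists psi.
have [psi' [Jpsi' [sub' [x /andP[asc_x nasc'_x]]]]] : exists psi', Jcompl J psi' /\
    (forall x, ascent psi' x -> ascent psi x) /\ exists x, ascent psi x && ~~ ascent psi' x.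
  by apply: NNPP => nsmaller; apply: nmg; split.
have xK : x.2 < K.
  by case/andP: (sub0 x asc_x) => _ /leq_trans; apply; apply/leqW/leq_bigmax.
have ltA : #|A psi'| < #|A psi|.
  apply: proper_card; apply/properP; split; first by apply/subsetP => y; rewrite !inE => /sub'.
  by exists (x.1, Ordinal xK); rewrite !inE /= -surjective_pairing.
have [|psi'' [mg'' sub'']] := IHN psi' _ Jpsi' (fun y asc_y => sub0 y (sub' y asc_y)).
  by apply: leq_trans ltA _; rewrite -ltnS.
by exists psi''; split=> // y /sub''/sub'.
Qed.

Lemma ascent_nonempty psi0 psi : J psi0 -> Jcompl J psi -> exists x, ascent psi x.
Proof.
move=> J0 [iso nJ].
have [p pos] : exists p, 0 < psi p.
  apply: NNPP => none; apply/nJ/(hJ.2 _ _ J0 iso) => p.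
  by case: (posnP (psi p)) => [->//|pos]; case: none; exists p.
pose below p := #|[set q : P | (q < p)%O]|.
case: (@arg_minnP _ p (fun p => 0 < psi p) below pos) => {pos}p pos_p pmin.
exists (p, 0); rewrite /ascent /= pos_p andbT; apply/forallP => q; apply/implyP => qp.
rewrite leqn0; apply: contraT; rewrite -lt0n => pos_q.
suff : below q < below p by rewrite ltnNge pmin.
apply: proper_card; apply/properP; split.
  by apply/subsetP => r; rewrite !inE => /lt_trans; apply.
by exists q; rewrite !inE ?ltxx.
Qed.

End Ascent.

Section Collapse.
Context {d : Order.disp_t} (P : finPOrderType d) (k : fieldType) (S : {fset (P * nat)}).
Local Open Scope ring_scope.
Local Notation n := #|{: S}|.
Local Notation polyS := (polyS k S).

Definition diffs (Bl : seq (S * S)) : seq polyS := [seq xv k b.1 - xv k b.2 | b <- Bl].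

Definition linpoly (v : {ffun S -> k^o}) : polyS := \sum_s v s *: xv k s.

Lemma linpoly0 : linpoly 0 = 0.
Proof. by rewrite /linpoly big1 // => s _; rewrite ffunE scale0r. Qed.

Lemma linpolyZD c v w : linpoly (c *: v + w) = c%:MP * linpoly v + linpoly w.
Proof.
rewrite /linpoly mul_mpolyC scaler_sumr -big_split; apply: eq_bigr => s _.
by rewrite !ffunE scalerDl scalerA.
Qed.

Lemma linpoly_evec s : linpoly (evec k s) = xv k s.
Proof.
rewrite /linpoly (bigD1 s) //= big1 => [|t /negbTE ts]; last by rewrite ffunE ts scale0r.
by rewrite ffunE eqxx scale1r addr0.
Qed.

Lemma linpolyB v w : linpoly (v - w) = linpoly v - linpoly w.
Proof. by rewrite /linpoly -sumrB; apply: eq_bigr => s _; rewrite !ffunE scalerBl. Qed.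

Lemma linpoly_dvec b : linpoly (dvec k b) = xv k b.1 - xv k b.2.
Proof. by rewrite linpolyB !linpoly_evec. Qed.

Lemma linpoly_span Bl v : v \in <<map (dvec k (S:=S)) Bl>>%VS ->
  ideal_of (fun g => g \in diffs Bl) (linpoly v).
Proof.
elim: Bl v => [|b Bl IH] v /=.
  by rewrite span_nil memv0 => /eqP->; rewrite linpoly0; apply: ideal_of0.
rewrite span_cons => /memv_addP[_ /vlineP[c ->] [w /IH Iw ->]].
rewrite linpolyZD linpoly_dvec; apply: ideal_ofMD; first by rewrite inE eqxx.
by apply: ideal_of_trans Iw => g Bl_g; apply: ideal_of_gen; rewrite inE Bl_g orbT.
Qed.

Variable Bl : seq (S * S).

Definition linked (s t : S) : bool := dvec k (s, t) \in <<map (dvec k (S:=S)) Bl>>%VS.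

Lemma linked_refl s : linked s s.
Proof. by rewrite /linked /dvec subrr mem0v. Qed.

Lemma linked_sym s t : linked s t -> linked t s.
Proof. by rewrite /linked -memvN /dvec opprB. Qed.

Lemma linked_trans s t u : linked s t -> linked t u -> linked s u.
Proof.
by rewrite /linked /dvec => st tu; rewrite -[evec k s](subrK (evec k t)) -addrA memvD.
Qed.

Lemma linked_gen b : b \in Bl -> linked b.1 b.2.
Proof. by move=> Bl_b; rewrite /linked -surjective_pairing memv_span // map_f. Qed.

Lemma linked_ideal s t : linked s t -> ideal_of (fun g => g \in diffs Bl) (xv k s - xv k t).
Proof. by move/linpoly_span; rewrite linpoly_dvec. Qed.

Definition rep (s : S) : S := odflt s [pick t | linked s t].

Lemma rep_linked s : linked s (rep s).
Proof. by rewrite /rep; case: pickP => [//|/(_ s)]; rewrite linked_refl. Qed.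

Lemma rep_eq s t : linked s t -> rep s = rep t.
Proof.
move=> st; rewrite /rep (eq_pick (Q := linked t)); last first.
  by move=> u; apply/idP/idP; apply: linked_trans; [apply: linked_sym|].
by case: pickP => // /(_ t); rewrite linked_refl.
Qed.

Lemma rep_eqE s t : (rep s == rep t) = linked s t.
Proof.
apply/eqP/idP => [eq_st|/rep_eq//]; apply: linked_trans (rep_linked s) _.
by rewrite eq_st; apply/linked_sym/rep_linked.
Qed.

Definition collapse_tuple : n.-tuple polyS := [tuple xv k (rep (enum_val i)) | i < n].
Definition collapse (f : polyS) : polyS := f \mPo collapse_tuple.
HB.instance Definition _ := GRing.LRMorphism.copy collapse (comp_mpoly collapse_tuple).

Lemma collapse_xv s : collapse (xv k s) = xv k (rep s).
Proof. by rewrite /collapse /xv comp_mpolyXU -tnth_nth tnth_mktuple enum_rankK. Qed.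

Lemma collapse_sub f : ideal_of (fun g => g \in diffs Bl) (f - collapse f).
Proof.
pose D p := ideal_of (fun g => g \in diffs Bl) (p - collapse p).
have DM p q : D p -> D q -> D (p * q).
  move=> Dp Dq; rewrite /D rmorphM.
  have -> : p * q - collapse p * collapse q =
            q * (p - collapse p) + collapse p * (q - collapse q).
    by rewrite !mulrBr addrA [q * p]mulrC [q * _]mulrC subrK.
  by apply: ideal_ofD; apply: ideal_ofM.
have D1 : D 1 by rewrite /D rmorph1 subrr; apply: ideal_of0.
have DX m : D 'X_[m].
  rewrite mpolyXE_id; apply: (big_ind D) => // i _.
  elim: (m i) => [|e IHe]; rewrite ?expr0 // exprS; apply: DM IHe.
  have -> : 'X_i = xv k (enum_val i) by rewrite /xv enum_valK.
  by rewrite /D collapse_xv; apply/linked_ideal/rep_linked.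
have -> : f - collapse f =
          \sum_(m <- msupp f) (f@_m *: 'X_[m] - collapse (f@_m *: 'X_[m])).
  by rewrite sumrB -raddf_sum -mpolyE.
apply: ideal_of_sum => m _.
by rewrite linearZ -scalerBr -mul_mpolyC; apply/ideal_ofM/DX.
Qed.

Variable J : {ffun P -> nat} -> Prop.

Definition ascent_mnm psi : 'X_{1..n} :=
  (\sum_(s : S | ascent psi (val s)) U_(enum_rank (rep s)))%MM.

Lemma collapse_monS psi : collapse (monS k S (ascent psi)) = 'X_[ascent_mnm psi].
Proof.
rewrite /ascent_mnm (big_morph _ (@mpolyXD _ _) (@mpolyX0 _ _)) rmorph_prod.
by apply: eq_bigr => s _; apply: collapse_xv.
Qed.

Definition collapsed_gens (m : 'X_{1..n}) : Prop :=
  exists2 psi, min_gen J psi & m = ascent_mnm psi.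

Lemma collapseP f : ideal_of (gens_with (LP_gen J) (diffs Bl)) f <->
  ideal_of (mono_gens collapsed_gens) (collapse f).
Proof.
have diff_sub p : ideal_of (gens_with (LP_gen J) (diffs Bl)) (p - collapse p).
  by apply: ideal_of_trans (collapse_sub p) => g Bl_g; apply: ideal_of_gen; right.
split=> [If|Icf].
  apply: ideal_of_rmorph If => g [[psi [mg ->]]|/mapP[b Bl_b ->]].
    by apply: ideal_of_gen; exists (ascent_mnm psi); [exists psi|exact: collapse_monS].
  by rewrite rmorphB /= !collapse_xv (rep_eq (linked_gen Bl_b)) subrr; apply: ideal_of0.
rewrite -(subrK (collapse f) f); apply: ideal_ofD (diff_sub f) _.
apply: ideal_of_trans Icf => _ [_ [psi mg ->] ->]; rewrite -collapse_monS.
have -> : forall q, collapse q = q - (q - collapse q) by move=> q; rewrite opprB addrC subrK.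
by apply: ideal_ofB (diff_sub _); apply: ideal_of_gen; left; exists psi.
Qed.

End Collapse.

Section Fibres.
Context {d : Order.disp_t} (P : finPOrderType d) (k : fieldType) (S : {fset (P * nat)})
  {dR : Order.disp_t} (R : porderType dR) (phi : S -> R).
Hypothesis phi_fib : forall s s' : S, s != s' -> phi s = phi s' ->
  ((val s).2 <= (val s').2)%N -> ((val s).2 < (val s').2)%N /\ ((val s').1 <= (val s).1)%O.
Variable Bl : seq (S * S).
Hypothesis Bl_ker : forall v, v \in <<map (dvec k (S:=S)) Bl>>%VS -> in_ker phi v.
Variables (J : {ffun P -> nat} -> Prop) (hJ : poset_ideal_Hom J).
Local Notation rep := (rep k Bl).
Local Open Scope ring_scope.

Lemma linked_phi s t : linked k Bl s t -> phi s = phi t.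
Proof.
move/Bl_ker/(_ (phi s)); apply: contra_eq => ne_st.
have nt u : phi u = phi s -> (u == t) = false.
  by move=> phiu; apply: contraNF ne_st => /eqP <-; rewrite phiu.
rewrite (bigD1 s) //= big1 => [|u /andP[/eqP phiu us]]; rewrite !ffunE /=.
  by rewrite eqxx (nt s) // subr0 addr0 oner_neq0.
by rewrite (negbTE us) (nt u phiu) subrr.
Qed.

Lemma phi_rep s : phi (rep s) = phi s.
Proof. by apply/esym/linked_phi/rep_linked. Qed.

Definition fibre (r : R) : seq (P * nat) := [seq val s | s in [pred s : S | phi s == r]].

Lemma fibre_chain r : right_strict_chain (fibre r).
Proof.
move=> _ _ /imageP[s /eqP phis ->] /imageP[t /eqP phit ->] le_st.
by have [->|ne_st] := eqVneq s t; [left|right; apply: phi_fib => //; rewrite phis phit].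
Qed.

Lemma ascent_mnm_le psi1 psi2 v :
  {in fibre (phi (enum_val v)), forall x, ascent psi1 x -> ascent psi2 x} ->
  (ascent_mnm k Bl psi1 v <= ascent_mnm k Bl psi2 v)%N.
Proof.
move=> sub; rewrite !mnm_sumE big_mkcond [leqRHS]big_mkcond; apply: leq_sum => s _.
rewrite !mnm1E; have [ev|_] := eqVneq (enum_rank (rep s)) v; last by case: ifP; case: ifP.
have Fs : val s \in fibre (phi (enum_val v)).
  by rewrite -ev enum_rankK phi_rep; apply: image_f; rewrite inE.
by case: ifP => // /(sub _ Fs) ->.
Qed.

Lemma collapsed_mmeet_closed a c : phi a = phi c ->
  mmeet_closed (collapsed_gens k Bl J) (enum_rank (rep a)) (enum_rank (rep c)).
Proof.
move=> ac w1 w2 w [_ [psi1 mg1 ->] le1] [_ [psi2 mg2 ->] le2] agree le_w.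
have [psi3 [J3 sub3 meet3]] := Jcompl_glue hJ mg1.1 mg2.1 (@fibre_chain (phi a)).
have [psi4 [mg4 sub4]] := min_gen_below J3.
exists (ascent_mnm k Bl psi4); first by exists psi4.
apply/mnm_lepP => v; apply: leq_trans (le_w v).
apply: (@leq_trans (ascent_mnm k Bl psi3 v)); first by apply: ascent_mnm_le => x _; apply: sub4.
move/mnm_lepP: le1 => /(_ v) le1; move/mnm_lepP: le2 => /(_ v) le2.
have [phiv|phiv] := eqVneq (phi (enum_val v)) (phi a).
  rewrite leq_min; apply/andP; split; [apply: (leq_trans _ le1)|apply: (leq_trans _ le2)];
    by apply: ascent_mnm_le => x; rewrite phiv => Fx /(meet3 x Fx)/andP[].
have [va vc] : v != enum_rank (rep a) /\ v != enum_rank (rep c).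
  by split; apply: contra phiv => /eqP->; rewrite enum_rankK phi_rep ?ac.
rewrite -(agree v va vc) minnn.
have [sub|sub] := sub3 _ (@fibre_chain (phi (enum_val v))).
  exact: leq_trans (ascent_mnm_le sub) le1.
by rewrite (agree v va vc); apply: leq_trans (ascent_mnm_le sub) le2.
Qed.

End Fibres.

Section Regularity.
Context {d : Order.disp_t} (P : finPOrderType d)
  (J : {ffun P -> nat} -> Prop) (hJ : poset_ideal_Hom J)
  (k : fieldType) (S : {fset (P * nat)}) (hS : forall x, Supp J x -> x \in S)
  {dR : Order.disp_t} (R : porderType dR) (phi : S -> R).
Hypothesis phi_fib : forall s s' : S, s != s' -> phi s = phi s' ->
  ((val s).2 <= (val s').2)%N -> ((val s).2 < (val s').2)%N /\ ((val s').1 <= (val s).1)%O.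
Variable B : seq (S * S).
Local Open Scope ring_scope.

Lemma linked_take_nth j b0 : free (map (dvec k (S:=S)) B) -> (j < size B)%N ->
  ~~ linked k (take j B) (nth b0 B j).1 (nth b0 B j).2.
Proof.
move=> freeB ltjB; rewrite /linked -surjective_pairing.
move: freeB; rewrite -{1}(cat_take_drop j B) (drop_nth b0 ltjB) map_cat /=.
rewrite (perm_free (permEl (perm_catCA _ [:: _] _))) /= free_cons => /andP[+ _].
by apply: contra; apply: (subvP (sub_span _)) => v; rewrite mem_cat => ->.
Qed.

Lemma diffs_proper : (exists psi, J psi) -> ~ ideal_of (gens_with (LP_gen J) (diffs k B)) 1.
Proof.
move=> [psi0 J0] I1; have ev0 s : (xv k s).@[fun _ => 0] = 0 by rewrite mevalXU.
suff: (1 : polyS k S).@[fun _ => 0] = 0 by rewrite meval1; apply/eqP/oner_neq0.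
apply: ideal_of_kernel I1 => g [[psi [mg ->]]|/mapP[b _ ->]]; last by rewrite rmorphB /= !ev0 subrr.
have [x asc_x] := ascent_nonempty hJ J0 mg.1.
have xS : x \in S by apply: hS; exists psi.
by rewrite /monS rmorph_prod (bigD1 (FSetSub xS)) //= ev0 mul0r.
Qed.

Hypotheses (hBfib : forall b, b \in B -> phi b.1 = phi b.2) (hB : kernel_basis k phi B).

Lemma take_ker j v : v \in <<map (dvec k (S:=S)) (take j B)>>%VS -> in_ker phi v.
Proof.
move=> v_span; apply/(hB.2 v).1; apply: (subvP (sub_span _)) v_span => u.
by rewrite map_take; apply: mem_take.
Qed.

Lemma diffs_weakly_regular : weakly_regular (LP_gen J) (diffs k B).
Proof.
move=> j; rewrite size_map => ltjB f; rewrite /diffs -map_take -/(diffs k _) !in_idealE !collapseP.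
have b0 : S * S by case: B ltjB.
rewrite (nth_map b0) // rmorphM rmorphB /= !collapse_xv.
have a_c := hBfib (mem_nth b0 ltjB).
have meet_ac := collapsed_mmeet_closed phi_fib (@take_ker j) hJ a_c.
apply: (mono_ideal_cancelXB _ meet_ac).
by rewrite (inj_eq enum_rank_inj) rep_eqE linked_take_nth // hB.1.
Qed.

End Regularity.

Theorem theorem2p1
  (d : Order.disp_t) (P : finPOrderType d)
  (J : {ffun P -> nat} -> Prop) (hJ : poset_ideal_Hom J)
  (k : fieldType)
  (S : {fset (P * nat)}) (hS : forall x, Supp J x -> x \in S)
  (dR : Order.disp_t) (R : porderType dR) (phi : S -> R)
  (phi_iso : forall s s' : S, le_PN (val s) (val s') -> (phi s <= phi s')%O)
  (phi_fib : forall s s' : S, s != s' -> phi s = phi s' ->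
       (val s).2 <= (val s').2 ->
       (val s).2 < (val s').2 /\ ((val s').1 <= (val s).1)%O)
  (B : seq (S * S))
  (hBfib : forall b, b \in B -> phi b.1 = phi b.2)
  (hB : kernel_basis k phi B) :
  let bs := [seq (xv k b.1 - xv k b.2)%R | b <- B] in
  weakly_regular (LP_gen (k:=k) (S:=S) J) bs /\
  ((exists psi, J psi) -> regular_seq (LP_gen (k:=k) (S:=S) J) bs).
Proof.
move=> bs; have reg : weakly_regular (LP_gen J) bs := diffs_weakly_regular hJ phi_fib hBfib hB.
by split=> // nJ; split=> //; rewrite in_idealE; exact: (diffs_proper (k := k) hJ hS nJ).
Qed.
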